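(* Let $\widehat V=\widehat S+\widehat F\in\mathrm{End}(\mathbb R^n)$ with $\widehat S^\top=\widehat S$, $\widehat F^\top=-\widehat F$, and let $H(\tilde\rho,y)=\tfrac12\|y\|^2+\langle y,\widehat V\tilde\rho\rangle$ on $N=\mathbb R^{2n}$ with symplectic form $\Omega=d\tilde\rho^i\wedge dy_i$, extended holomorphically (bilinearly) to $N_{\mathbb C}\simeq\mathbb C^{2n}$, with complex Hamiltonian vector field $X_H(\tilde\rho,y)=(a,b)=(y+\widehat V\tilde\rho,\,-\widehat V^\top y)$. Let $M_\ast=(1-i)I$ (so $\mathrm{Im}\,M_\ast=-I$), and let $\Pi^{(+)}_{M_\ast}$ be the projector of $\mathbb C^n\oplus\mathbb C^n$ onto $L^{(+)}=\{(u,M_\ast u)\}$ along $L^{(-)}=\{(u,\bar M_\ast u)\}$, explicitly $\Pi^{(+)}_{M_\ast}(a,b)=(u,M_\ast u)$ with $u=(2i\,\mathrm{Im}\,M_\ast)^{-1}(b-\bar M_\ast a)$. Consider the projected dynamics $\dot z=\Pi^{(+)}_{M_\ast}X_H(z)$ for $z=(\tilde\rho,y)\in\mathbb C^{2n}$, and set $\psi=(1-i)\tilde\rho+iy$, $\phi=(1+i)\tilde\rho-iy$. Then each affine leaf $\{\phi=\phi_0\}$ is invariant under this dynamics (in particular $\{\phi=0\}$ is invariant), and on $\{\phi=0\}$ one has $i\dot\psi=(I+\widehat S+i\widehat F)\psi$. Equivalently, $\Psi(t):=e^{it}\psi(t)$ satisfies $i\dot\Psi=(\widehat S+i\widehat 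F)\Psi$.
   Context: $\langle\cdot,\cdot\rangle$, $\|\cdot\|$ denote the Euclidean inner product/norm, extended complex-bilinearly where needed. *)

From mathcomp Require Import all_boot all_order all_algebra.
From mathcomp Require Import all_classical all_reals all_analysis.
From mathcomp Require Import complex.
Set Implicit Arguments. Unset Strict Implicit. Unset Printing Implicit Defensive.
Import Order.TTheory GRing.Theory Num.Theory.
Local Open Scope ring_scope.

Section Defs.
Variable R : realType.
Local Notation C := R[i].

Definition RtoC (x : R) : C := real_complex R x.

Definition has_deriv (f : R -> C) (t : R) (l : C) : Prop :=
  forall e : R, 0 < e -> exists d : R, 0 < d /\
    forall h : R, h != 0 -> `|h| < d ->
      `| (RtoC h)^-1 * (f (t + h) - f t) - l | < RtoC e.

Definition has_vderiv n (f : R -> 'cV[C]_n) (t : R) (l : 'cV[C]_n) : Prop :=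
  forall j : 'I_n, has_deriv (fun s => f s j 0) t (l j 0).

Definition cmx m n (A : 'M[R]_(m, n)) : 'M[C]_(m, n) := map_mx RtoC A.

(* complex Hamiltonian vector field of H(rho,y) = 1/2|y|^2 + <y, V rho>
   (bilinear extension):  X_H(rho, y) = (y + V rho, - V^T y) *)
Definition XH n (V : 'M[R]_n) (rho y : 'cV[C]_n) : 'cV[C]_n * 'cV[C]_n :=
  (y + cmx V *m rho, - (cmx V)^T *m y).

Definition Im_mx n (M : 'M[C]_n) : 'M[C]_n := map_mx (fun x => 'Im x) M.
Definition conj_mx n (M : 'M[C]_n) : 'M[C]_n := map_mx (fun x => x^*) M.

(* projector onto L+ = {(u, M u)} along L- = {(u, conj(M) u)}:
   Pi(a,b) = (u, M u) with u = (2i Im M)^{-1} (b - conj(M) a) *)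
Definition Pi_plus n (M : 'M[C]_n) (ab : 'cV[C]_n * 'cV[C]_n)
  : 'cV[C]_n * 'cV[C]_n :=
  let u := invmx ((2 * 'i) *: Im_mx M) *m (ab.2 - conj_mx M *m ab.1) in
  (u, M *m u).

Definition Mstar n : 'M[C]_n := (1 - 'i)%:M.

Definition psi_of n (rho y : 'cV[C]_n) : 'cV[C]_n := (1 - 'i) *: rho + 'i *: y.
Definition phi_of n (rho y : 'cV[C]_n) : 'cV[C]_n := (1 + 'i) *: rho - 'i *: y.

Definition expi (t : R) : C := RtoC (cos t) + 'i * RtoC (sin t).

End Defs.

From mathcomp Require Import all_boot all_order all_algebra.
From mathcomp Require Import all_classical all_reals all_analysis.
From mathcomp Require Import complex.
From mathcomp Require Import ring.
Import Order.TTheory GRing.Theory Num.Theory.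
Import numFieldNormedType.Exports.
Local Open Scope ring_scope.

(* For M_* = (1 - i) I the projector Pi^(+) has image L^(+) = {(u, (1 - i) u)},
   which is exactly the hyperplane {phi = 0}.  Hence phi' = phi(Pi^(+) X_H) = 0,
   so phi is conserved.  On {phi = 0} we have y = (1 - i) rho and psi = 2 rho,
   while the psi-component of Pi^(+)(a, b) is i (b - (1 + i) a); with
   V^T = S - F this gives i psi' = (1 + i) a - b = (I + S + i F) psi.  The factor
   e^{it} then cancels the identity term. *)

Section RealDerivative.
Local Open Scope classical_set_scope.

Lemma near0_punctured_ballP (R : numFieldType) (P : R -> Prop) :
  (\forall h \near 0^', P h) <->
  exists d : R, 0 < d /\ forall h, h != 0 -> `|h| < d -> P h.
Proof.
rewrite near_withinE; split.
- move=> /nbhs_ballP[d d0 Pd]; exists d; split => // h h0 hd.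
  by apply: Pd => //; rewrite /ball /= sub0r normrN.
- move=> [d [d0 Pd]]; apply/nbhs_ballP; exists d => // h.
  by rewrite /ball /= sub0r normrN => hd h0; exact: Pd.
Qed.

Lemma is_derive1_ltP (R : numFieldType) (g : R -> R) (t l : R) :
  is_derive t (1 : R) g l <->
  forall e, 0 < e -> exists d, 0 < d /\ forall h, h != 0 -> `|h| < d ->
    `|h^-1 * (g (t + h) - g t) - l| < e.
Proof.
have quotE : (fun h : R => h^-1 *: ((g \o shift t) (h *: (1 : R)) - g t)) =
             (fun h => h^-1 * (g (t + h) - g t)).
  apply: funext => h /=; rewrite /shift /= [t + _]addrC.
  by congr (_ * (g (_ + _) - _)); exact: mulr1.
have quotP :
    (fun h : R => h^-1 *: ((g \o shift t) (h *: (1 : R)) - g t)) @ (0 : R)^' --> l <->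
    forall e, 0 < e -> exists d, 0 < d /\ forall h, h != 0 -> `|h| < d ->
      `|h^-1 * (g (t + h) - g t) - l| < e.
  rewrite quotE; split => [/cvgrPdist_lt lim e e0 | lim].
  - by apply/near0_punctured_ballP; apply: filterS (lim e e0) => h; rewrite distrC.
  - apply/cvgrPdist_lt => e e0; have /near0_punctured_ballP := lim e e0.
    by apply: filterS => h; rewrite distrC.
split => [[dg dgE] | /quotP lim]; first by apply/quotP; rewrite -dgE; exact: dg.
by split; [exact: cvgP lim | exact: cvg_lim lim].
Qed.

Lemma eq_is_derive {R : numFieldType} {V W : normedModType R} {f g : V -> W}
    {x v : V} {df dg : W} :
  is_derive x v f df -> f =1 g -> df = dg -> is_derive x v g dg.
Proof. by move=> ? /funext <- <-. Qed.

End RealDerivative.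

Section ComplexValuedDerivative.
Context {R : realType}.
Local Notation C := R[i].

Lemma normc_RtoC (x : R) : `|RtoC x| = RtoC `|x|.
Proof. by rewrite normc_def /= expr0n addr0 sqrtr_sqr. Qed.

Lemma normc_ge_Im (w : C) : RtoC `|complex.Im w| <= `|w|.
Proof.
have := normc_ge_Re (w * 'i%C); rewrite ReiNIm normrN normrM.
by rewrite complexiE normCi mulr1.
Qed.

Lemma normc_le_ReIm (w : C) : `|w| <= RtoC (`|complex.Re w| + `|complex.Im w|).
Proof.
rewrite [w in `|w|]complexE /RtoC rmorphD /=; apply: le_trans (ler_normD _ _) _.
by rewrite normrM complexiE normCi mul1r -![real_complex _ `|_|]normc_RtoC.
Qed.

Lemma Re_RtoCV_mul (x : R) (z : C) : complex.Re ((RtoC x)^-1 * z) = x^-1 * complex.Re z.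
Proof. by rewrite /RtoC -fmorphV; case: z => a b /=; rewrite mul0r subr0. Qed.

Lemma Im_RtoCV_mul (x : R) (z : C) : complex.Im ((RtoC x)^-1 * z) = x^-1 * complex.Im z.
Proof. by rewrite /RtoC -fmorphV; case: z => a b /=; rewrite mul0r addr0. Qed.

Lemma has_derivP (f : R -> C) (t : R) (l : C) :
  has_deriv f t l <->
  is_derive t (1 : R) (fun s => complex.Re (f s)) (complex.Re l) /\
  is_derive t (1 : R) (fun s => complex.Im (f s)) (complex.Im l).
Proof.
rewrite !is_derive1_ltP.
set q := fun h : R => (RtoC h)^-1 * (f (t + h) - f t) - l.
have ReqE h : complex.Re (q h) = h^-1 * (complex.Re (f (t + h)) - complex.Re (f t)) - complex.Re l.
  by rewrite /q raddfB /= Re_RtoCV_mul raddfB.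
have ImqE h : complex.Im (q h) = h^-1 * (complex.Im (f (t + h)) - complex.Im (f t)) - complex.Im l.
  by rewrite /q raddfB /= Im_RtoCV_mul raddfB.
split => [df | [dRe dIm] e e0].
- split => e e0; have [d [d0 qd]] := df e e0; exists d; split => // h h0 hd;
  have := qd h h0 hd; rewrite -/(q h) -ltcR.
  + by rewrite -ReqE; apply: le_lt_trans (normc_ge_Re _).
  + by rewrite -ImqE; apply: le_lt_trans (normc_ge_Im _).
- have e20 : 0 < e / 2 by rewrite divr_gt0.
  have [d1 [d10 qd1]] := dRe _ e20; have [d2 [d20 qd2]] := dIm _ e20.
  exists (Num.min d1 d2); split; first by rewrite lt_min d10 d20.
  move=> h h0; rewrite lt_min => /andP[hd1 hd2]; rewrite -/(q h).
  apply: le_lt_trans (normc_le_ReIm _) _; rewrite ltcR [e]splitr ReqE ImqE.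
  by rewrite ltrD ?qd1 ?qd2.
Qed.

Lemma has_derivD {f g : R -> C} {t : R} {a b : C} :
  has_deriv f t a -> has_deriv g t b -> has_deriv (fun s => f s + g s) t (a + b).
Proof.
move=> /has_derivP[fRe fIm] /has_derivP[gRe gIm]; apply/has_derivP; split.
- by apply: (eq_is_derive (is_deriveD fRe gRe)) => [s|]; rewrite /= raddfD.
- by apply: (eq_is_derive (is_deriveD fIm gIm)) => [s|]; rewrite /= raddfD.
Qed.

Lemma has_derivB {f g : R -> C} {t : R} {a b : C} :
  has_deriv f t a -> has_deriv g t b -> has_deriv (fun s => f s - g s) t (a - b).
Proof.
move=> /has_derivP[fRe fIm] /has_derivP[gRe gIm]; apply/has_derivP; split.
- by apply: (eq_is_derive (is_deriveB fRe gRe)) => [s|]; rewrite /= raddfB.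
- by apply: (eq_is_derive (is_deriveB fIm gIm)) => [s|]; rewrite /= raddfB.
Qed.

Lemma has_derivM {f g : R -> C} {t : R} {a b : C} :
  has_deriv f t a -> has_deriv g t b ->
  has_deriv (fun s => f s * g s) t (a * g t + f t * b).
Proof.
move=> /has_derivP[fRe fIm] /has_derivP[gRe gIm]; apply/has_derivP; split.
- apply: (eq_is_derive (is_deriveB (is_deriveM fRe gRe) (is_deriveM fIm gIm))).
    by move=> s; rewrite !fctE; case: (f s) => ? ?; case: (g s) => ? ? /=.
  clear fRe fIm gRe gIm; case: (f t) (g t) a b => [? ?] [? ?] [? ?] [? ?] /=.
  by rewrite /GRing.scale /=; ring.
- apply: (eq_is_derive (is_deriveD (is_deriveM fRe gIm) (is_deriveM fIm gRe))).
    by move=> s; rewrite !fctE; case: (f s) => ? ?; case: (g s) => ? ? /=.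
  clear fRe fIm gRe gIm; case: (f t) (g t) a b => [? ?] [? ?] [? ?] [? ?] /=.
  by rewrite /GRing.scale /=; ring.
Qed.

Lemma has_deriv_cst (c : C) (t : R) : has_deriv (fun _ => c) t 0.
Proof. by apply/has_derivP; split; exact: is_derive_cst. Qed.

Lemma has_deriv_expi (t : R) : has_deriv (@expi R) t ('i * expi t).
Proof.
apply/has_derivP; rewrite /expi /RtoC -complexiE; split.
- by apply: (eq_is_derive (is_derive_cos t)) => [s|] /=; ring.
- by apply: (eq_is_derive (is_derive_sin t)) => [s|] /=; ring.
Qed.

Lemma has_deriv0_is_cst (f : R -> C) (x y : R) :
  (forall t, has_deriv f t 0) -> f x = f y.
Proof.
move=> df0.
have dRe t : is_derive t (1 : R) (fun s => complex.Re (f s)) 0 by case: (has_derivP f t 0).1.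
have dIm t : is_derive t (1 : R) (fun s => complex.Im (f s)) 0 by case: (has_derivP f t 0).1.
have := is_derive_0_is_cst x y dRe; have := is_derive_0_is_cst x y dIm.
by case: (f x) (f y) => ? ? [? ?] /= -> ->.
Qed.

Lemma eq_has_deriv {f g : R -> C} {t : R} {a b : C} :
  has_deriv f t a -> f =1 g -> a = b -> has_deriv g t b.
Proof. by move=> ? /funext <- <-. Qed.

End ComplexValuedDerivative.

Section VectorValuedDerivative.
Context {R : realType} {n : nat}.
Local Notation C := R[i].

Lemma has_vderivD {f g : R -> 'cV[C]_n} {t : R} {a b : 'cV[C]_n} :
  has_vderiv f t a -> has_vderiv g t b -> has_vderiv (fun s => f s + g s) t (a + b).
Proof.
move=> df dg j; apply: (eq_has_deriv (has_derivD (df j) (dg j))) => [s|]; by rewrite !mxE.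
Qed.

Lemma has_vderivB {f g : R -> 'cV[C]_n} {t : R} {a b : 'cV[C]_n} :
  has_vderiv f t a -> has_vderiv g t b -> has_vderiv (fun s => f s - g s) t (a - b).
Proof.
move=> df dg j; apply: (eq_has_deriv (has_derivB (df j) (dg j))) => [s|]; by rewrite !mxE.
Qed.

Lemma has_vderivZ {e : R -> C} {e' : C} {f : R -> 'cV[C]_n} {t : R} {a : 'cV[C]_n} :
  has_deriv e t e' -> has_vderiv f t a ->
  has_vderiv (fun s => e s *: f s) t (e' *: f t + e t *: a).
Proof.
move=> de df j; apply: (eq_has_deriv (has_derivM de (df j))) => [s|]; by rewrite !mxE.
Qed.

Lemma has_vderivZc (c : C) {f : R -> 'cV[C]_n} {t : R} {a : 'cV[C]_n} :
  has_vderiv f t a -> has_vderiv (fun s => c *: f s) t (c *: a).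
Proof. by move/(has_vderivZ (has_deriv_cst c t)); rewrite scale0r add0r. Qed.

Lemma has_vderiv0_is_cst {f : R -> 'cV[C]_n} (x y : R) :
  (forall t, has_vderiv f t 0) -> f x = f y.
Proof.
move=> df0; apply/matrixP => j k; rewrite [k]ord1.
by apply: (has_deriv0_is_cst (fun s => f s j 0)) => t; have := df0 t j; rewrite mxE.
Qed.

End VectorValuedDerivative.

Section ProjectedHamiltonianFlow.
Context {R : realType} {n : nat}.
Local Notation C := R[i].

Definition projected_field (V : 'M[R]_n) (rho y : 'cV[C]_n) : 'cV[C]_n * 'cV[C]_n :=
  Pi_plus (Mstar R n) (XH V rho y).

Lemma Pi_plus_Mstar (a b : 'cV[C]_n) :
  Pi_plus (Mstar R n) (a, b) =
  (('i / 2) *: (b - (1 + 'i) *: a), (1 - 'i) *: (('i / 2) *: (b - (1 + 'i) *: a))).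
Proof.
have ImM : Im_mx (Mstar R n) = (-1)%:M.
  apply/matrixP => j k; rewrite !mxE; case: eqP => _ /=.
  - by rewrite !mulr1n raddfB /= Im_i (Creal_ImP _ (real1 _)) sub0r.
  - by rewrite !mulr0n raddf0.
have conjM : conj_mx (Mstar R n) = (1 + 'i)%:M.
  apply/matrixP => j k; rewrite !mxE; case: eqP => _ /=.
  - by rewrite !mulr1n rmorphB /= conjC1 conjCi opprK.
  - by rewrite !mulr0n rmorph0.
have scaleE : (- (2 * 'i : C))^-1 = 'i / 2.
  apply: mulr1_eq; have i2 : ('i : C) ^+ 2 = -1 := sqrCi _.
  have h2 : (2 : C) != 0 by rewrite pnatr_eq0.
  by field: i2.
rewrite /Pi_plus /= ImM conjM scale_scalar_mx mulrN1 invmx_scalar scaleE.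
by rewrite !mul_scalar_mx.
Qed.

Lemma phi_of_Lplus (u : 'cV[C]_n) : phi_of u ((1 - 'i) *: u) = 0.
Proof.
have i2 : ('i : C) ^+ 2 = -1 := sqrCi _.
by rewrite /phi_of scalerA -scalerBl (_ : _ - _ = 0) ?scale0r //; ring: i2.
Qed.

Lemma psi_of_Lplus (u : 'cV[C]_n) : psi_of u ((1 - 'i) *: u) = 2 *: u.
Proof.
have i2 : ('i : C) ^+ 2 = -1 := sqrCi _.
by rewrite /psi_of scalerA -scalerDl; congr (_ *: _); ring: i2.
Qed.

Lemma phi_of_eq0 (rho y : 'cV[C]_n) : phi_of rho y = 0 -> y = (1 - 'i) *: rho.
Proof.
have i2 : ('i : C) ^+ 2 = -1 := sqrCi _.
move/eqP; rewrite subr_eq0 => /eqP phi0.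
transitivity ((- 'i * 'i) *: y); first by rewrite mulNr -expr2 i2 opprK scale1r.
by rewrite -scalerA -phi0 scalerA; congr (_ *: _); ring: i2.
Qed.

Lemma phi_of_projected_field {V : 'M[R]_n} {rho y rho' y' : 'cV[C]_n} :
  projected_field V rho y = (rho', y') -> phi_of rho' y' = 0.
Proof. by rewrite /projected_field /XH Pi_plus_Mstar => -[<- <-]; exact: phi_of_Lplus. Qed.

Lemma psi_of_projected_field {S F : 'M[R]_n} {rho rho' y' : 'cV[C]_n} :
  S^T = S -> F^T = - F ->
  projected_field (S + F) rho ((1 - 'i) *: rho) = (rho', y') ->
  'i *: psi_of rho' y' = (1%:M + cmx S + 'i *: cmx F) *m psi_of rho ((1 - 'i) *: rho).
Proof.
move=> hS hF; rewrite /projected_field /XH Pi_plus_Mstar => -[<- <-].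
have VE : cmx (S + F) = cmx S + cmx F by rewrite /cmx /RtoC raddfD.
have VtE : (cmx (S + F))^T = cmx S - cmx F.
  by rewrite /cmx /RtoC map_trmx linearD /= hS hF raddfD raddfN.
rewrite !psi_of_Lplus VtE VE -!scalemxAr !mulmxDl mulNmx mulmxBl mul1mx -scalemxAl.
set A := cmx S *m rho; set B := cmx F *m rho.
have i2 : ('i : C) ^+ 2 = -1 := sqrCi _.
have h2 : (2 : C) != 0 by rewrite pnatr_eq0.
by apply/matrixP => j k; rewrite !mxE; field: i2.
Qed.

Lemma has_vderiv_psi_of {rho y : R -> 'cV[C]_n} {t : R} {a b : 'cV[C]_n} :
  has_vderiv rho t a -> has_vderiv y t b ->
  has_vderiv (fun s => psi_of (rho s) (y s)) t (psi_of a b).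
Proof. by move=> da db; exact: has_vderivD (has_vderivZc _ da) (has_vderivZc _ db). Qed.

Lemma has_vderiv_phi_of {rho y : R -> 'cV[C]_n} {t : R} {a b : 'cV[C]_n} :
  has_vderiv rho t a -> has_vderiv y t b ->
  has_vderiv (fun s => phi_of (rho s) (y s)) t (phi_of a b).
Proof. by move=> da db; exact: has_vderivB (has_vderivZc _ da) (has_vderivZc _ db). Qed.

End ProjectedHamiltonianFlow.

Lemma phase_shift_schrodinger (K : numClosedFieldType) (m : nat) (M : 'M[K]_m)
    (P D : 'cV[K]_m) (e : K) :
  'i *: D = (1%:M + M) *m P -> 'i *: (('i * e) *: P + e *: D) = M *m (e *: P).
Proof.
have i2 : ('i : K) ^+ 2 = -1 := sqrCi _.
move=> schrodinger; rewrite scalerDr (_ : 'i *: (e *: D) = e *: ('i *: D)).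
  rewrite schrodinger mulmxDl mul1mx -scalemxAr; move: (M *m P) => Q.
  by apply/matrixP => j k; rewrite !mxE; ring: i2.
by rewrite !scalerA mulrC.
Qed.

Theorem mainTheorem9 (R : realType) (n : nat) (S F : 'M[R]_n)
  (hS : S^T = S) (hF : F^T = - F)
  (rho y rho' y' : R -> 'cV[R[i]]_n)
  (hrho : forall t, has_vderiv rho t (rho' t))
  (hy : forall t, has_vderiv y t (y' t))
  (hode : forall t,
     (rho' t, y' t) = Pi_plus (Mstar R n) (XH (S + F) (rho t) (y t))) :
  (* each leaf {phi = phi_0} is invariant: phi is constant along solutions *)
  (forall t, phi_of (rho t) (y t) = phi_of (rho 0) (y 0)) /\
  (* on {phi = 0}: i psi' = (I + S + i F) psi *)
  (phi_of (rho 0) (y 0) = 0 ->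
     forall t, exists dpsi : 'cV[R[i]]_n,
       has_vderiv (fun s => psi_of (rho s) (y s)) t dpsi /\
       'i *: dpsi = (1%:M + cmx S + 'i *: cmx F) *m psi_of (rho t) (y t)) /\
  (* equivalently, Psi(t) = e^{it} psi(t) satisfies i Psi' = (S + i F) Psi *)
  (phi_of (rho 0) (y 0) = 0 ->
     forall t, exists dPsi : 'cV[R[i]]_n,
       has_vderiv (fun s => expi s *: psi_of (rho s) (y s)) t dPsi /\
       'i *: dPsi = (cmx S + 'i *: cmx F) *m (expi t *: psi_of (rho t) (y t))).
Proof.
have dphi t : has_vderiv (fun s => phi_of (rho s) (y s)) t 0.
  rewrite -(phi_of_projected_field (esym (hode t))); exact: has_vderiv_phi_of.
have dpsi t := has_vderiv_psi_of (hrho t) (hy t).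
have schrodinger : phi_of (rho 0) (y 0) = 0 -> forall t,
    'i *: psi_of (rho' t) (y' t) = (1%:M + cmx S + 'i *: cmx F) *m psi_of (rho t) (y t).
  move=> phi00 t; have yE : y t = (1 - 'i) *: rho t by apply: phi_of_eq0; rewrite (has_vderiv0_is_cst t 0 dphi).
  by rewrite yE; apply: psi_of_projected_field hS hF _; rewrite -yE; exact: esym (hode t).
split; first by move=> t; exact: has_vderiv0_is_cst t 0 dphi.
split=> phi00 t.
- by exists (psi_of (rho' t) (y' t)); split; [exact: dpsi | exact: schrodinger].
- exists (('i * expi t) *: psi_of (rho t) (y t) + expi t *: psi_of (rho' t) (y' t)).
  split; first exact: has_vderivZ (has_deriv_expi t) (dpsi t).
  by apply: phase_shift_schrodinger; rewrite addrA; exact: schrodinger.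
Qed.
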